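(* Consider the problem $\min_{x\in X}\{\psi(x):=f(x)+h(x)\}$ with the setting, inexact oracle, prox setup and Algorithm AGM described in the context. Assume $f$ is equipped with an inexact first-order oracle with uncontrolled error $\delta_u$ and function $L(\cdot)$, and that for any constants $c_1,c_2>0$ there exists an integer $i\ge 0$ such that $2^i c_1\ge L\!\left(\frac{c_2}{c_1 2^i}\right)$. Assume also there exists $\psi^*>-\infty$ with $\psi(x)\ge\psi^*$ for all $x\in X$. Then, after $N$ iterations of Algorithm AGM (i.e. for iterates $x_0,\dots,x_N$ and accepted constants $M_0,\dots,M_{N-1}$), with $K\in\{0,\dots,N-1\}$ an index minimizing $\|M_k(x_k-x_{k+1})\|_{\mathcal{E}}$ over $k\in\{0,\dots,N-1\}$, it holds that $$\|M_K(x_K-x_{K+1})\|_{\mathcal{E}}^2\le\Big(\sum_{k=0}^{N-1}\frac{1}{2M_k}\Big)^{-1}\big(\psi(x_0)-\psi^*+N(4\delta_u+\delta_{pu})\big)+\frac{\varepsilon}{2}.$$ Moreover, the total number of checks of the acceptance inequality (over these $N$ iterations) is not more than $2N-1+\log_2\frac{M_{N-1}}{L_0}$.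
   Context: Setting: $\mathcal{E}$ is a finite-dimensional real vector space with norm $\|\cdot\|_{\mathcal{E}}$, dual $\mathcal{E}^*$ with dual norm $\|\cdot\|_{\mathcal{E},*}$; $\langle g,x\rangle$ is the value of $g\in\mathcal{E}^*$ at $x$. $X\subseteq\mathcal{E}$ is closed convex, $h$ is convex on $X$, $f:X\to\mathbb{R}$. Inexact oracle: $f$ is equipped with an inexact first-order oracle on $X$ if there exist $\delta_u>0$ and a function $L:(0,\infty)\to(0,\infty)$ such that at any $x\in X$, for any $\delta_c>0$, one can compute $\tilde f(x,\delta_c,\delta_u)\in\mathbb{R}$ and $\tilde g(x,\delta_c,\delta_u)\in\mathcal{E}^*$ with $|f(x)-\tilde f(x,\delta_c,\delta_u)|\le\delta_c+\delta_u$ and $f(y)-\big(\tilde f(x,\delta_c,\delta_u)+\langle\tilde g(x,\delta_c,\delta_u),y-x\rangle\big)\le\frac{L(\delta_c)}{2}\|x-y\|_{\mathcal{E}}^2+\delta_c+\delta_u$ for all $y\in X$. Prox setup: $d$ is continuous and convex on $X$, admits a selection of subgradients $d'(x)$ continuous on $X^0$ (the set of $x\in X$ where $d'(x)$ exists), and is $1$-strongly convex: $d(y)-d(x)-\langle d'(x),y-x\rangle\ge\frac12\|y-x\|_{\mathcal{E}}^2$ for $x\in X^0,y\in X$. Bregman divergence: $V[z](x)=d(x)-d(z)-\langle d'(z),x-z\rangle$. Inexact composite prox-mapping: given $\delta_{pu}>0$, $\gamma>0$, $\bar x\in X^0$, $g\in\mathcal{E}^*$, $\delta_{pc}>0$,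 a point $\tilde x\in X^0$ such that there is $p\in\partial h(\tilde x)$ with $\langle g+\frac1\gamma[d'(\tilde x)-d'(\bar x)]+p,u-\tilde x\rangle\ge-\delta_{pc}-\delta_{pu}$ for all $u\in X$ (an approximate minimizer of $\langle g,x\rangle+\frac1\gamma V[\bar x](x)+h(x)$ over $X$). Algorithm AGM: input $\varepsilon>0$, $\delta_u>0$ (oracle uncontrolled error), $\delta_{pu}>0$, $x_0\in X^0$, $L_0>0$. For $k=0,1,\dots$: set $M_k:=L_k/2$; repeat { $M_k:=2M_k$; $\delta_{c,k}=\delta_{pc,k}=\frac{\varepsilon}{20M_k}$; compute $\tilde f_k=\tilde f(x_k,\delta_{c,k},\delta_u)$, $\tilde g_k=\tilde g(x_k,\delta_{c,k},\delta_u)$; compute $w_k$ an inexact composite prox-mapping with $\bar x=x_k$, $g=\tilde g_k$, $\gamma=1/M_k$, errors $\delta_{pc,k},\delta_{pu}$; compute $\tilde f(w_k,\delta_{c,k},\delta_u)$ } until (acceptance inequality) $\tilde f(w_k,\delta_{c,k},\delta_u)\le\tilde f_k+\langle\tilde g_k,w_k-x_k\rangle+\frac{M_k}{2}\|w_k-x_k\|_{\mathcal{E}}^2+\frac{\varepsilon}{10M_k}+2\delta_u$; then set $x_{k+1}=w_k$, $L_{k+1}=M_k/2$. Here $M_k$ denotes its value at acceptance. *)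

From HB Require Import structures.
From mathcomp Require Import all_boot all_order all_algebra.
From mathcomp Require Import all_classical all_reals all_analysis.
Set Implicit Arguments. Unset Strict Implicit. Unset Printing Implicit Defensive.
Import Order.TTheory GRing.Theory Num.Theory.
Import numFieldNormedType.Exports.
Local Open Scope classical_set_scope.
Local Open Scope ring_scope.

(* The finite-dimensional space E is modelled as 'rV[R]_n; its dual E^* is
   identified with 'rV[R]_n through the canonical pairing [dot g x]. *)
Definition dot (R : realType) (n : nat) (g x : 'rV[R]_n) : R :=
  \sum_(i < n) g ord0 i * x ord0 i.

Definition is_norm (R : realType) (n : nat) (nrm : 'rV[R]_n -> R) : Prop :=
  [/\ forall x, 0 <= nrm x,
      forall x, nrm x = 0 -> x = 0,
      forall (a : R) x, nrm (a *: x) = `|a| * nrm x &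
      forall x y, nrm (x + y) <= nrm x + nrm y].

Definition convex_on (R : realType) (n : nat) (X : set 'rV[R]_n)
  (h : 'rV[R]_n -> R) : Prop :=
  forall x y (t : R), X x -> X y -> 0 <= t <= 1 ->
    h (t *: x + (1 - t) *: y) <= t * h x + (1 - t) * h y.

Definition subgrad (R : realType) (n : nat) (X : set 'rV[R]_n)
  (h : 'rV[R]_n -> R) (x p : 'rV[R]_n) : Prop :=
  forall y, X y -> h x + dot p (y - x) <= h y.

(* inexact first-order oracle (ftil x dc, gtil x dc) = (f~(x,dc,du), g~(x,dc,du)) *)
Definition inexact_oracle (R : realType) (n : nat) (nrm : 'rV[R]_n -> R)
  (X : set 'rV[R]_n) (f : 'rV[R]_n -> R) (du : R) (L : R -> R)
  (ftil : 'rV[R]_n -> R -> R) (gtil : 'rV[R]_n -> R -> 'rV[R]_n) : Prop :=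
  [/\ 0 < du,
      forall dc, 0 < dc -> 0 < L dc &
      forall x dc, X x -> 0 < dc ->
        `|f x - ftil x dc| <= dc + du /\
        forall y, X y ->
          f y - (ftil x dc + dot (gtil x dc) (y - x))
            <= L dc / 2 * nrm (x - y) ^+ 2 + dc + du].

Definition X0_of (R : realType) (n : nat) (X : set 'rV[R]_n)
  (d : 'rV[R]_n -> R) : set 'rV[R]_n :=
  [set x | X x /\ exists g, subgrad X d x g].

Definition prox_setup (R : realType) (n : nat) (nrm : 'rV[R]_n -> R)
  (X : set 'rV[R]_n) (d : 'rV[R]_n -> R) (d' : 'rV[R]_n -> 'rV[R]_n) : Prop :=
  [/\ {within X, continuous d},
      convex_on X d,
      forall x, X0_of X d x -> subgrad X d x (d' x),
      {within X0_of X d, continuous d'} &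
      forall x y, X0_of X d x -> X y ->
        d y - d x - dot (d' x) (y - x) >= 1 / 2 * nrm (y - x) ^+ 2].

Definition bregman (R : realType) (n : nat) (d : 'rV[R]_n -> R)
  (d' : 'rV[R]_n -> 'rV[R]_n) (z x : 'rV[R]_n) : R :=
  d x - d z - dot (d' z) (x - z).

Definition inexact_prox (R : realType) (n : nat) (X : set 'rV[R]_n)
  (h d : 'rV[R]_n -> R) (d' : 'rV[R]_n -> 'rV[R]_n)
  (dpu gamma : R) (xbar g : 'rV[R]_n) (dpc : R) (xt : 'rV[R]_n) : Prop :=
  X0_of X d xt /\
  exists p, subgrad X h xt p /\
    forall u, X u ->
      dot (g + (1 / gamma) *: (d' xt - d' xbar) + p) (u - xt) >= - dpc - dpu.

(* Lk k = L_k, M k = accepted M_k, nchk k = number of checks of the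
   acceptance inequality at iteration k (trials t = 0 .. nchk k - 1, the
   t-th trial using M = Lk k * 2^t), w k t = trial point at trial t. *)
Definition agm_trial_M (R : realType) (Lk : nat -> R) (k t : nat) : R :=
  Lk k * 2 ^+ t.

Definition agm_accept (R : realType) (n : nat) (nrm : 'rV[R]_n -> R)
  (ftil : 'rV[R]_n -> R -> R) (gtil : 'rV[R]_n -> R -> 'rV[R]_n)
  (eps du Mt : R) (xk wk : 'rV[R]_n) : Prop :=
  let dc := eps / (20 * Mt) in
  ftil wk dc <= ftil xk dc + dot (gtil xk dc) (wk - xk)
                + Mt / 2 * nrm (wk - xk) ^+ 2 + eps / (10 * Mt) + 2 * du.

Definition agm_run (R : realType) (n : nat) (nrm : 'rV[R]_n -> R)
  (X : set 'rV[R]_n) (h d : 'rV[R]_n -> R) (d' : 'rV[R]_n -> 'rV[R]_n)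
  (ftil : 'rV[R]_n -> R -> R) (gtil : 'rV[R]_n -> R -> 'rV[R]_n)
  (eps du dpu L0 : R) (x0 : 'rV[R]_n) (N : nat)
  (x : nat -> 'rV[R]_n) (Lk M : nat -> R) (nchk : nat -> nat)
  (w : nat -> nat -> 'rV[R]_n) : Prop :=
  [/\ x 0%N = x0, Lk 0%N = L0 &
      forall k, (k < N)%N ->
      [/\ (0 < nchk k)%N,
          M k = agm_trial_M Lk k (nchk k).-1,
          Lk k.+1 = M k / 2,
          x k.+1 = w k (nchk k).-1 &
          forall t, (t < nchk k)%N ->
            let Mt := agm_trial_M Lk k t in
            let dc := eps / (20 * Mt) in
            inexact_prox X h d d' dpu (Mt^-1) (x k) (gtil (x k) dc) dc (w k t)
            /\ (agm_accept nrm ftil gtil eps du Mt (x k) (w k t)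
                <-> t = (nchk k).-1)]].

Definition log2 (R : realType) (y : R) : R := ln y / ln 2.

From HB Require Import structures.
From mathcomp Require Import all_boot all_order all_algebra.
From mathcomp Require Import all_classical all_reals all_analysis.
From mathcomp Require Import ring lra.

Set Implicit Arguments.
Unset Strict Implicit.
Unset Printing Implicit Defensive.
Import Order.TTheory GRing.Theory Num.Theory.
Import numFieldNormedType.Exports.
Local Open Scope classical_set_scope.
Local Open Scope ring_scope.

(* Strong convexity of d makes d' strongly monotone.  Testing the approximate
   optimality condition of the k-th prox step at u = x_k and combining it with
   the acceptance test and the oracle error bounds gives the descent inequality
     |M_k (x_k - x_{k+1})|^2 / (2 M_k)
       <= psi(x_k) - psi(x_{k+1}) + eps / (4 M_k) + 4 du + dpu.
   Summing it telescopes psi down to psi^*, and the minimal residual is at most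
   the weighted mean of all residuals.  For the count, an iteration with i_k
   checks multiplies L_k by 2^(i_k - 2), so
     M_{N-1} = 2 L_N = L_0 2^(1 + sum_k i_k - 2N). *)

Section Dot.
Variables (R : realType) (n : nat).
Implicit Types (a b c : 'rV[R]_n).

Lemma dotDl a b c : dot (a + b) c = dot a c + dot b c.
Proof.
by rewrite /dot -big_split; apply: eq_bigr => i _; rewrite mxE mulrDl.
Qed.

Lemma dotZl (s : R) a c : dot (s *: a) c = s * dot a c.
Proof. by rewrite /dot mulr_sumr; apply: eq_bigr => i _; rewrite mxE mulrA. Qed.

Lemma dotBl a b c : dot (a - b) c = dot a c - dot b c.
Proof. by rewrite dotDl -scaleN1r dotZl mulN1r. Qed.

Lemma dotNr a c : dot a (- c) = - dot a c.
Proof. by rewrite /dot -sumrN; apply: eq_bigr => i _; rewrite mxE mulrN. Qed.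

End Dot.

Section Norm.
Variables (R : realType) (n : nat) (nrm : 'rV[R]_n -> R).
Hypothesis nrm_norm : is_norm nrm.

Lemma nrm_ge0 a : 0 <= nrm a.
Proof. by case: nrm_norm. Qed.

Lemma nrmN a : nrm (- a) = nrm a.
Proof.
by case: nrm_norm => _ _ nrmZ _; rewrite -scaleN1r nrmZ normrN1 mul1r.
Qed.

Lemma nrmB a b : nrm (a - b) = nrm (b - a).
Proof. by rewrite -nrmN opprB. Qed.

Lemma nrmZ_ge0 (s : R) a : 0 <= s -> nrm (s *: a) = s * nrm a.
Proof. by case: nrm_norm => _ _ nrmZ _ s_ge0; rewrite nrmZ ger0_norm. Qed.

End Norm.

Lemma ler_sum_telescope (R : realDomainType) (a b c : nat -> R) (m : nat) :
  (forall k, (k < m)%N -> a k <= b k - b k.+1 + c k) ->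
  \sum_(k < m) a k <= b 0%N - b m + \sum_(k < m) c k.
Proof.
elim: m => [|m IHm] abc; first by rewrite !big_ord0 subrr addr0.
rewrite !big_ord_recr /=.
have := IHm (fun k lt_km => abc k (ltnW lt_km)); have := abc m (ltnSn m).
lra.
Qed.

Lemma ler_min_wsum (R : realDomainType) (a G : nat -> R) (m K : nat) :
  (forall k, (k < m)%N -> 0 <= a k) -> (forall k, (k < m)%N -> G K <= G k) ->
  G K * \sum_(k < m) a k <= \sum_(k < m) G k * a k.
Proof.
move=> a_ge0 GK_min; rewrite mulr_sumr; apply: ler_sum => k _.
by rewrite ler_wpM2r ?a_ge0 ?GK_min.
Qed.

Section Log2.
Variable R : realType.

Lemma log2_div (a b : R) : 0 < a -> 0 < b -> log2 (a / b) = log2 a - log2 b.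
Proof. by move=> a_gt0 b_gt0; rewrite /log2 ln_div ?posrE // mulrBl. Qed.

Lemma log2_exp2 (k : nat) : log2 (2 ^+ k : R) = k%:R.
Proof.
have ln2_gt0 : 0 < ln (2 : R) by apply: ln_gt0; rewrite ltr1n.
by rewrite /log2 lnXn // -[_ *+ k]mulr_natl mulfK ?gt_eqF.
Qed.

End Log2.

Section ProxStep.
Variables (R : realType) (n : nat) (nrm : 'rV[R]_n -> R).
Variables (X : set 'rV[R]_n) (d : 'rV[R]_n -> R) (d' : 'rV[R]_n -> 'rV[R]_n).
Hypotheses (nrm_norm : is_norm nrm) (prox_d : prox_setup nrm X d d').

Lemma dprime_strongly_monotone x y : X0_of X d x -> X0_of X d y ->
  nrm (y - x) ^+ 2 <= dot (d' y - d' x) (y - x).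
Proof.
case: prox_d => _ _ _ _ d_sc x0 y0.
have := d_sc x y x0 (proj1 y0); have := d_sc y x y0 (proj1 x0).
rewrite dotBl -opprB dotNr nrmN //; lra.
Qed.

Lemma inexact_prox_descent (h : 'rV[R]_n -> R) (dpu M : R) xb g dc w :
  0 < M -> X0_of X d xb -> inexact_prox X h d d' dpu M^-1 xb g dc w ->
  dot g (w - xb) + M * nrm (w - xb) ^+ 2 <= h xb - h w + dc + dpu.
Proof.
move=> M_gt0 xb0 [w0 [p [p_sub opt]]].
have Xxb := proj1 xb0.
have := opt xb Xxb; have := p_sub xb Xxb.
rewrite -[xb - w]opprB div1r invrK !dotNr 2!dotDl dotZl.
have := ler_wpM2l (ltW M_gt0) (dprime_strongly_monotone xb0 w0); lra.
Qed.

End ProxStep.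

Section AcceptedStep.
Variables (R : realType) (n : nat) (nrm : 'rV[R]_n -> R) (X : set 'rV[R]_n).
Variables (f h d : 'rV[R]_n -> R) (d' : 'rV[R]_n -> 'rV[R]_n).
Variables (du : R) (L : R -> R).
Variables (ftil : 'rV[R]_n -> R -> R) (gtil : 'rV[R]_n -> R -> 'rV[R]_n).
Hypotheses (nrm_norm : is_norm nrm) (prox_d : prox_setup nrm X d d').
Hypothesis oracle : inexact_oracle nrm X f du L ftil gtil.

Lemma agm_accepted_step_descent (eps dpu M : R) xk wk :
  0 < eps -> 0 < M -> X0_of X d xk ->
  inexact_prox X h d d' dpu M^-1 xk (gtil xk (eps / (20 * M)))
    (eps / (20 * M)) wk ->
  agm_accept nrm ftil gtil eps du M xk wk ->
  nrm (M *: (xk - wk)) ^+ 2 / (2 * M)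
    <= f xk + h xk - (f wk + h wk) + eps / (4 * M) + (4 * du + dpu).
Proof.
move=> eps_gt0 M_gt0 xk0; rewrite /agm_accept.
set dc := eps / (20 * M) => prox.
have dc_gt0 : 0 < dc by rewrite divr_gt0 ?mulr_gt0.
have descent := inexact_prox_descent nrm_norm prox_d M_gt0 xk0 prox.
have [[Xwk _] _] := prox.
case: oracle => _ _ oracle_err.
have [+ _] := oracle_err wk dc Xwk dc_gt0.
have [+ _] := oracle_err xk dc (proj1 xk0) dc_gt0.
rewrite !ler_norml => /andP[? ?] /andP[? ?].
(* dc is paid five times: two oracle errors, twice in the acceptance test,
   once in the prox error. *)
have -> : eps / (10 * M) = 2 * dc by rewrite /dc; field; rewrite gt_eqF.
have -> : eps / (4 * M) = 5 * dc by rewrite /dc; field; rewrite gt_eqF.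
rewrite (nrmZ_ge0 nrm_norm _ (ltW M_gt0)) (nrmB nrm_norm xk).
have -> : (M * nrm (wk - xk)) ^+ 2 / (2 * M) = M / 2 * nrm (wk - xk) ^+ 2.
  by field; rewrite gt_eqF.
lra.
Qed.

End AcceptedStep.

Section Backtracking.
Variables (R : realType) (L0 : R) (Lk M : nat -> R).
Variables (nchk : nat -> nat) (N : nat).
Hypothesis Lk0 : Lk 0%N = L0.
Hypothesis schedule : forall k, (k < N)%N ->
  [/\ (0 < nchk k)%N, M k = Lk k * 2 ^+ (nchk k).-1 & Lk k.+1 = M k / 2].

Lemma backtracking_Lk m : (m <= N)%N ->
  Lk m * 2 ^+ (2 * m) = L0 * 2 ^+ (\sum_(k < m) nchk k).
Proof.
elim: m => [|m IHm] le_mN; first by rewrite Lk0 big_ord0 muln0 !expr0.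
have [nchk_gt0 M_eq L_eq] := schedule le_mN.
rewrite big_ord_recr /= exprD mulrA -(IHm (ltnW le_mN)) L_eq M_eq.
set c := (nchk m).-1; have -> : nchk m = c.+1 by rewrite prednK.
rewrite mulnSr exprD !exprS expr0.
by field.
Qed.

Lemma backtracking_count : 0 < L0 -> (0 < N)%N ->
  (\sum_(k < N) nchk k)%:R = 2 * N%:R - 1 + log2 (M N.-1 / L0).
Proof.
move=> L0_gt0 N_gt0.
have lt_N1N : (N.-1 < N)%N by rewrite ltn_predL.
have [_ _] := schedule lt_N1N; rewrite (prednK N_gt0) => LN.
have := backtracking_Lk (leqnn N); set s := (\sum_(k < N) nchk k)%N => LkN.
have two_neq0 : (2 : R) != 0 by rewrite pnatr_eq0.
have -> : M N.-1 / L0 = 2 ^+ s.+1 / 2 ^+ (2 * N).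
  have -> : M N.-1 = 2 * Lk N by rewrite LN mulrC divfK.
  rewrite -(mulfK (expf_neq0 (2 * N) two_neq0) (Lk N)) LkN exprS.
  by field; rewrite expf_neq0 ?gt_eqF.
by rewrite log2_div ?exprn_gt0 // !log2_exp2 -natr1 natrM; lra.
Qed.

End Backtracking.

Section AGMRun.
Variables (R : realType) (n : nat) (nrm : 'rV[R]_n -> R) (X : set 'rV[R]_n).
Variables (f h d : 'rV[R]_n -> R) (d' : 'rV[R]_n -> 'rV[R]_n).
Variables (du : R) (L : R -> R).
Variables (ftil : 'rV[R]_n -> R -> R) (gtil : 'rV[R]_n -> R -> 'rV[R]_n).
Variables (eps dpu L0 : R) (x0 : 'rV[R]_n) (N : nat).
Variables (x : nat -> 'rV[R]_n) (Lk M : nat -> R) (nchk : nat -> nat).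
Variable w : nat -> nat -> 'rV[R]_n.
Hypotheses (nrm_norm : is_norm nrm) (prox_d : prox_setup nrm X d d').
Hypothesis oracle : inexact_oracle nrm X f du L ftil gtil.
Hypotheses (eps_gt0 : 0 < eps) (L0_gt0 : 0 < L0) (x0_X0 : X0_of X d x0).
Hypothesis run :
  agm_run nrm X h d d' ftil gtil eps du dpu L0 x0 N x Lk M nchk w.

Lemma agm_run_accepted k : (k < N)%N ->
  [/\ M k = Lk k * 2 ^+ (nchk k).-1, Lk k.+1 = M k / 2,
      inexact_prox X h d d' dpu (M k)^-1 (x k) (gtil (x k) (eps / (20 * M k)))
        (eps / (20 * M k)) (x k.+1) &
      agm_accept nrm ftil gtil eps du (M k) (x k) (x k.+1)].
Proof.
case: run => _ _ /[apply] -[nchk_gt0 M_eq L_eq x_eq trials].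
have last_trial : ((nchk k).-1 < nchk k)%N by rewrite ltn_predL.
have [prox accept] := trials _ last_trial.
by split; rewrite // M_eq x_eq //; apply/accept.
Qed.

Lemma agm_run_feasible k : (k <= N)%N -> 0 < Lk k /\ X0_of X d (x k).
Proof.
elim: k => [|k IHk] le_kN; first by case: run => -> ->.
have [Lk_gt0 _] := IHk (ltnW le_kN).
have [M_eq L_eq [xk1_X0 _] _] := agm_run_accepted le_kN.
by rewrite L_eq M_eq divr_gt0 ?mulr_gt0 ?exprn_gt0.
Qed.

Lemma agm_M_gt0 k : (k < N)%N -> 0 < M k.
Proof.
move=> lt_kN; have [Lk_gt0 _] := agm_run_feasible (ltnW lt_kN).
by have [-> _ _ _] := agm_run_accepted lt_kN; rewrite mulr_gt0 ?exprn_gt0.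
Qed.

Lemma agm_step_descent k : (k < N)%N ->
  nrm (M k *: (x k - x k.+1)) ^+ 2 / (2 * M k)
    <= f (x k) + h (x k) - (f (x k.+1) + h (x k.+1))
       + eps / (4 * M k) + (4 * du + dpu).
Proof.
move=> lt_kN; have [_ xk_X0] := agm_run_feasible (ltnW lt_kN).
have [_ _ prox accept] := agm_run_accepted lt_kN.
exact: (agm_accepted_step_descent nrm_norm prox_d oracle eps_gt0
  (agm_M_gt0 lt_kN) xk_X0 prox accept).
Qed.

Lemma agm_weighted_residual_sum :
  \sum_(k < N) nrm (M k *: (x k - x k.+1)) ^+ 2 * (1 / (2 * M k))
    <= f x0 + h x0 - (f (x N) + h (x N))
       + eps / 2 * \sum_(k < N) 1 / (2 * M k) + N%:R * (4 * du + dpu).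
Proof.
have [x_0 _ _] := run; rewrite -x_0 -addrA.
have -> : eps / 2 * \sum_(k < N) 1 / (2 * M k) + N%:R * (4 * du + dpu)
    = \sum_(k < N) (eps / 2 * (1 / (2 * M k)) + (4 * du + dpu)).
  by rewrite big_split /= mulr_sumr sumr_const card_ord [N%:R * _]mulr_natl.
apply: (ler_sum_telescope
  (a := fun k => nrm (M k *: (x k - x k.+1)) ^+ 2 * (1 / (2 * M k)))
  (b := fun k => f (x k) + h (x k))
  (c := fun k => eps / 2 * (1 / (2 * M k)) + (4 * du + dpu))) => k lt_kN.
have M_gt0 := agm_M_gt0 lt_kN.
have -> : eps / 2 * (1 / (2 * M k)) = eps / (4 * M k).
  by field; rewrite gt_eqF.
by rewrite div1r addrA; apply: agm_step_descent.
Qed.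

Lemma agm_min_residual_bound (psistar : R) (K : nat) :
  (forall y, X y -> psistar <= f y + h y) -> (K < N)%N ->
  (forall k, (k < N)%N ->
     nrm (M K *: (x K - x K.+1)) <= nrm (M k *: (x k - x k.+1))) ->
  nrm (M K *: (x K - x K.+1)) ^+ 2
    <= (\sum_(k < N) 1 / (2 * M k))^-1
         * (f x0 + h x0 - psistar + N%:R * (4 * du + dpu)) + eps / 2.
Proof.
move=> psi_ge lt_KN K_min.
set S := \sum_(k < N) 1 / (2 * M k).
have wt_gt0 k : (k < N)%N -> 0 < 1 / (2 * M k).
  by move=> /agm_M_gt0 M_gt0; rewrite divr_gt0 ?mulr_gt0.
have S_gt0 : 0 < S.
  rewrite /S (bigD1 (Ordinal lt_KN)) //= ltr_wpDr ?wt_gt0 // sumr_ge0 // => k _.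
  exact/ltW/wt_gt0.
have min_le_mean : nrm (M K *: (x K - x K.+1)) ^+ 2 * S
    <= \sum_(k < N) nrm (M k *: (x k - x k.+1)) ^+ 2 * (1 / (2 * M k)).
  apply: (ler_min_wsum (a := fun k => 1 / (2 * M k))
    (G := fun k => nrm (M k *: (x k - x k.+1)) ^+ 2)) => k lt_kN.
    exact/ltW/wt_gt0.
  by rewrite ler_sqr ?nnegrE ?(nrm_ge0 nrm_norm) ?K_min.
have := agm_weighted_residual_sum; rewrite -/S => residual_sum.
have [_ [XN _]] := agm_run_feasible (leqnn N).
have psiN := psi_ge _ XN.
set A := f x0 + h x0 - psistar + N%:R * (4 * du + dpu).
have -> : S^-1 * A + eps / 2 = (A + eps / 2 * S) / S.
  by field; rewrite gt_eqF.
rewrite ler_pdivlMr // /A; lra.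
Qed.

End AGMRun.

Theorem theorem1 (R : realType) (n : nat) (nrm : 'rV[R]_n -> R)
  (X : set 'rV[R]_n) (f h d : 'rV[R]_n -> R) (d' : 'rV[R]_n -> 'rV[R]_n)
  (du : R) (L : R -> R)
  (ftil : 'rV[R]_n -> R -> R) (gtil : 'rV[R]_n -> R -> 'rV[R]_n)
  (eps dpu L0 psistar : R) (x0 : 'rV[R]_n) (N : nat)
  (x : nat -> 'rV[R]_n) (Lk M : nat -> R) (nchk : nat -> nat)
  (w : nat -> nat -> 'rV[R]_n) (K : nat) :
  is_norm nrm ->
  closed X -> convex_set X ->
  convex_on X h ->
  prox_setup nrm X d d' ->
  inexact_oracle nrm X f du L ftil gtil ->
  (forall c1 c2 : R, 0 < c1 -> 0 < c2 ->
     exists i : nat, 2 ^+ i * c1 >= L (c2 / (c1 * 2 ^+ i))) ->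
  (forall y, X y -> f y + h y >= psistar) ->
  0 < eps -> 0 < dpu -> 0 < L0 -> X0_of X d x0 ->
  agm_run nrm X h d d' ftil gtil eps du dpu L0 x0 N x Lk M nchk w ->
  (0 < N)%N ->
  (K < N)%N ->
  (forall k, (k < N)%N ->
     nrm (M K *: (x K - x K.+1)) <= nrm (M k *: (x k - x k.+1))) ->
  nrm (M K *: (x K - x K.+1)) ^+ 2
    <= (\sum_(k < N) 1 / (2 * M k))^-1
         * (f x0 + h x0 - psistar + N%:R * (4 * du + dpu)) + eps / 2
  /\ (\sum_(k < N) nchk k)%:R <= 2 * N%:R - 1 + log2 (M N.-1 / L0).
Proof.
(* Closedness and convexity of X and h only make the prox-mappings exist, and
   the growth condition on L only makes every backtracking loop terminate;
   agm_run already describes a completed run. *)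
move=> nrm_norm _ _ _ prox_d oracle _ psi_ge eps_gt0 _ L0_gt0 x0_X0 run N_gt0.
move=> lt_KN K_min; split.
  exact: (agm_min_residual_bound nrm_norm prox_d oracle eps_gt0 L0_gt0 x0_X0
    run psi_ge lt_KN K_min).
have [_ Lk0 steps] := run.
have schedule k : (k < N)%N ->
    [/\ (0 < nchk k)%N, M k = Lk k * 2 ^+ (nchk k).-1 & Lk k.+1 = M k / 2].
  by move=> /steps[].
by rewrite (backtracking_count Lk0 schedule L0_gt0 N_gt0).
Qed.
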